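(* Let $T\ge 1$, $\ell\ge 0$ and $N\ge 1$ be integers. There exists a $(T,N,1)$-tropical code within maximum delay $\ell$ if and only if $N\le(\ell+2)^T-(\ell+1)^T$.
   Context: Tropical arithmetic on $\mathbb{R}\cup\{\infty\}$: $x\oplus y=\min(x,y)$, $x\odot y=x+y$, with $x\oplus\infty=x$ and $x\odot\infty=\infty$. For a matrix $S$ with $T$ rows and $N$ columns and a column vector $\mathbf{x}$ of length $N$, $S\odot\mathbf{x}$ is the vector whose $t$-th entry is $\min_{j}(S_{tj}+x_j)$. A $(T,N,D)$-tropical code is a matrix $S\in(\{0\}\cup\mathbb{N}\cup\{\infty\})^{T\times N}$ such that for any two distinct vectors $\mathbf{x},\mathbf{y}\in(\{0\}\cup\mathbb{N}\cup\{\infty\})^{N}$, each having at most $D$ finite entries, $S\odot\mathbf{x}\ne S\odot\mathbf{y}$. It is within maximum delay $\ell$ if $S\in\{0,1,\dots,\ell,\infty\}^{T\times N}$. *)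

From mathcomp Require Import all_boot.
Set Implicit Arguments. Unset Strict Implicit. Unset Printing Implicit Defensive.

(* Tropical semiring on {0} ∪ N ∪ {∞}: [Some n] is the natural number n,
   [None] is ∞. *)
Definition trop := option nat.

Definition tplus (x y : trop) : trop :=
  match x, y with
  | None, _ => y
  | _, None => x
  | Some a, Some b => Some (minn a b)
  end.

Definition ttimes (x y : trop) : trop :=
  match x, y with
  | Some a, Some b => Some (a + b)
  | _, _ => None
  end.

Definition tmatvec (T N : nat) (S : {ffun 'I_T * 'I_N -> trop})
  (x : {ffun 'I_N -> trop}) : {ffun 'I_T -> trop} :=
  [ffun t => foldr (fun j acc => tplus (ttimes (S (t, j)) (x j)) acc) None
               (enum 'I_N)].

Definition nfinite (N : nat) (x : {ffun 'I_N -> trop}) : nat :=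
  #|[pred j | x j != None]|.

Definition tropical_code (T N D : nat) (S : {ffun 'I_T * 'I_N -> trop}) : Prop :=
  forall x y : {ffun 'I_N -> trop},
    nfinite x <= D -> nfinite y <= D -> x <> y ->
    tmatvec S x <> tmatvec S y.

Definition within_delay (T N l : nat) (S : {ffun 'I_T * 'I_N -> trop}) : Prop :=
  forall i, if S i is Some a then a <= l else true.

From mathcomp Require Import all_boot.
Set Implicit Arguments. Unset Strict Implicit. Unset Printing Implicit Defensive.

(* Write c_j for the j-th column of S and a ⊙ v for the vector
   v shifted by the finite scalar a.  A vector with at most one finite entry
   is either all-∞ or a "unit" vector e_j^a (value a at j), and S ⊙ e_j^a is
   a ⊙ c_j.  Hence S is a (T,N,1)-tropical code iff no column is all-∞ and
   the shifted columns a ⊙ c_j are pairwise distinct.  Every column with a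
   finite entry is uniquely m ⊙ n with n "normalized", i.e. containing a 0
   entry, and the code condition says exactly that the normalized columns are
   pairwise distinct.  Within delay l, normalized columns are the vectors of
   {0..l,∞}^T containing a 0, and there are (l+2)^T - (l+1)^T of them. *)

Definition zvec (n : nat) : {ffun 'I_n -> trop} := [ffun => None].

Section Vectors.

Variable T : nat.
Implicit Types (v w : {ffun 'I_T -> trop}) (a b m : nat).

Definition tshift a v : {ffun 'I_T -> trop} := [ffun t => ttimes (v t) (Some a)].

Lemma tshiftD a b v : tshift a (tshift b v) = tshift (b + a) v.
Proof. by apply/ffunP => t; rewrite !ffunE; case: (v t) => //= c; rewrite addnA. Qed.

Lemma tshift_inj a : injective (tshift a).
Proof.
move=> v w /ffunP E; apply/ffunP => t; move: (E t); rewrite !ffunE.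
by case: (v t) => [c|]; case: (w t) => [d|] //= [/addIn ->].
Qed.

Definition has_zero v : bool := [exists t, v t == Some 0].

(* Comparing the shifts at a zero entry of v bounds the shift amounts. *)
Lemma tshift_has_zero_le a b v w :
  has_zero v -> tshift a v = tshift b w -> b <= a.
Proof.
case/existsP=> t /eqP vt /ffunP /(_ t); rewrite !ffunE vt /=.
by case: (w t) => // c []; rewrite add0n => ->; rewrite leq_addl.
Qed.

Lemma tshift_has_zero_inj a b v w : has_zero v -> has_zero w ->
  tshift a v = tshift b w -> a = b /\ v = w.
Proof.
move=> zv zw E; have eab : a = b.
  by apply/eqP; rewrite eqn_leq (tshift_has_zero_le zw (esym E))
                        (tshift_has_zero_le zv E).
by split=> //; apply: (tshift_inj (a := a)); rewrite E eab.
Qed.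

(* Every vector with a finite entry is a shift of a normalized vector: shift
   by its least finite entry. *)
Lemma normal_form v : [exists t, v t != None] ->
  exists m w, v = tshift m w /\ has_zero w.
Proof.
case/existsP=> t0 vt0.
case: (@arg_minnP _ t0 [pred t | v t != None] (fun t => odflt 0 (v t)) vt0) => t /=.
case vt: (v t) => [m|] // _ minm; exists m, [ffun s => omap (subn^~ m) (v s)].
split; last by apply/existsP; exists t; rewrite ffunE vt /= subnn.
apply/ffunP => s; rewrite !ffunE; case vs: (v s) => [c|] //=.
by rewrite subnK //; move: (minm s); rewrite vs; exact.
Qed.

Definition vec_within (l : nat) v : Prop :=
  forall t, if v t is Some a then a <= l else true.

(* Shifting only increases entries, so normalizing preserves the delay bound. *)
Lemma vec_within_tshift l m v : vec_within l (tshift m v) -> vec_within l v.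
Proof.
move=> hv t; move: (hv t); rewrite ffunE.
by case: (v t) => //= a; apply: leq_trans; rewrite leq_addr.
Qed.

(* Vectors within delay l are encoded in the finite type of maps into
   option 'I_l.+1. *)
Definition embed (l : nat) (u : {ffun 'I_T -> option 'I_l.+1}) : {ffun 'I_T -> trop} :=
  [ffun t => omap val (u t)].

Lemma embed_inj l : injective (@embed l).
Proof.
move=> u u' /ffunP E; apply/ffunP => t; move: (E t); rewrite !ffunE.
by case: (u t) => [i|]; case: (u' t) => [j|] //= [/val_inj ->].
Qed.

Lemma embed_within l (u : {ffun 'I_T -> option 'I_l.+1}) : vec_within l (embed u).
Proof. by move=> t; rewrite ffunE; case: (u t) => //= i; rewrite -ltnS. Qed.

Lemma embed_onto l v : vec_within l v -> exists u, v = @embed l u.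
Proof.
move=> hv; exists [ffun t => omap inord (v t)]; apply/ffunP => t.
by rewrite !ffunE; move: (hv t); case: (v t) => //= a al; rewrite inordK.
Qed.

Definition zero_vecs (l : nat) : {set {ffun 'I_T -> option 'I_l.+1}} :=
  [set u : {ffun 'I_T -> option 'I_l.+1} | [exists t, u t == Some ord0]].

Lemma has_zero_embed l (u : {ffun 'I_T -> option 'I_l.+1}) : has_zero (embed u) = (u \in zero_vecs l).
Proof.
rewrite inE; apply: eq_existsb => t; rewrite ffunE.
by case: (u t) => [i|] //=; rewrite -(inj_eq val_inj).
Qed.

(* Counting by complement: the vectors avoiding 0 are maps into l+1 values. *)
Lemma card_zero_vecs l : #|zero_vecs l| = (l + 2) ^ T - (l + 1) ^ T.
Proof.
have Hcompl : #|~: zero_vecs l| = (l + 1) ^ T.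
  have -> : (l + 1) ^ T = #|predC1 (Some (@ord0 l))| ^ #|'I_T|.
    by rewrite cardC1 card_option !card_ord addn1.
  rewrite -card_ffun_on; apply: eq_card => u; rewrite !inE negb_exists.
  by apply/forallP/ffun_onP => h t; move: (h t); rewrite !inE.
have := cardsC (zero_vecs l).
by rewrite card_ffun card_option !card_ord Hcompl addn2 => <-; rewrite addnK.
Qed.

End Vectors.

Section Matrices.

Variables T N : nat.
Implicit Types (S : {ffun 'I_T * 'I_N -> trop}) (x : {ffun 'I_N -> trop}).

Definition column S (j : 'I_N) : {ffun 'I_T -> trop} := [ffun t => S (t, j)].

Definition evec (j : 'I_N) (a : nat) : {ffun 'I_N -> trop} :=
  [ffun k => if k == j then Some a else None].

Lemma tmatvec_evec S j a : tmatvec S (evec j a) = tshift a (column S j).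
Proof.
apply/ffunP => t; rewrite /tmatvec !ffunE.
have gen s : foldr (fun k acc => tplus (ttimes (S (t, k)) (evec j a k)) acc) None s
             = if j \in s then ttimes (S (t, j)) (Some a) else None.
  elim: s => [|k s IH] //=; rewrite IH inE ffunE.
  have [->|ne] := eqVneq k j.
    by case: (j \in s); case: (S (t, j)) => //= b; rewrite minnn.
  by case: (S (t, k)).
by rewrite gen mem_enum.
Qed.

Lemma tmatvec_zvec S : tmatvec S (zvec N) = zvec T.
Proof.
apply/ffunP => t; rewrite /tmatvec !ffunE.
by elim: (enum 'I_N) => //= k s ->; rewrite ffunE; case: (S (t, k)).
Qed.

Lemma nfinite_evec j a : nfinite (evec j a) <= 1.
Proof.
rewrite /nfinite -(card1 j); apply: subset_leq_card; apply/subsetP => k.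
by rewrite !inE ffunE; case: (k == j).
Qed.

Lemma nfinite_zvec : nfinite (zvec N) <= 1.
Proof. by rewrite /nfinite eq_card0 // => k; rewrite !inE ffunE. Qed.

Lemma nfinite_le1P x : nfinite x <= 1 -> x = zvec N \/ exists j a, x = evec j a.
Proof.
rewrite /nfinite => /card_le1P uniq_fin.
case: (pickP [pred j | x j != None]) => [j fin_j | no_fin]; last first.
  by left; apply/ffunP => k; rewrite ffunE; move: (no_fin k) => /=; case: (x k).
right; move: (fin_j); rewrite inE; case xj: (x j) => [a|] // _.
exists j, a; apply/ffunP => k; rewrite ffunE; have [->//|ne] := eqVneq k j.
case xk: (x k) => [b|] //; case/eqP: ne.
by move: (uniq_fin j fin_j k); rewrite !inE xk => /esym/eqP.
Qed.

Lemma evec_inj_index j k a b : evec j a = evec k b -> j = k.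
Proof. by move/ffunP/(_ j); rewrite !ffunE eqxx; case: eqP. Qed.

(* In a (T,N,1)-code no column is all-∞: otherwise e_j^0 and the all-∞
   vector would have the same image. *)
Lemma code_column_finite S j :
  tropical_code 1 S -> [exists t, column S j t != None].
Proof.
move=> code; apply: contraT; rewrite negb_exists => /forallP none_j.
exfalso; apply: (code (zvec N) (evec j 0) (nfinite_zvec) (nfinite_evec j 0)).
  by move/ffunP/(_ j); rewrite !ffunE eqxx.
rewrite tmatvec_zvec tmatvec_evec; apply/ffunP => t; rewrite !ffunE.
by move: (none_j t); rewrite ffunE negbK => /eqP ->.
Qed.

Lemma code_shift_index S j k a b : tropical_code 1 S ->
  tshift a (column S j) = tshift b (column S k) -> j = k.
Proof.
move=> code E; apply/eqP/negPn/negP => njk.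
apply: (code (evec j a) (evec k b) (nfinite_evec j a) (nfinite_evec k b)).
  by move/evec_inj_index/eqP; rewrite (negbTE njk).
by rewrite !tmatvec_evec.
Qed.

Lemma normalized_columns_code S :
  injective (column S) -> (forall j, has_zero (column S j)) -> tropical_code 1 S.
Proof.
move=> col_inj col_zero x y /nfinite_le1P hx /nfinite_le1P hy.
have shift_neq_z j a : tmatvec S (evec j a) != zvec T.
  rewrite tmatvec_evec; case/existsP: (col_zero j) => t; rewrite ffunE => /eqP zt.
  by apply/eqP => /ffunP/(_ t); rewrite !ffunE zt.
case: hx hy => [->|[j [a ->]]] [->|[k [b ->]]].
- by [].
- by move=> _ E; move: (shift_neq_z k b); rewrite -E tmatvec_zvec eqxx.
- by move=> _ E; move: (shift_neq_z j a); rewrite E tmatvec_zvec eqxx.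
- move=> nxy; rewrite !tmatvec_evec.
  move/(tshift_has_zero_inj (col_zero j) (col_zero k)).
  by case=> eab /col_inj jk; apply: nxy; rewrite jk eab.
Qed.

End Matrices.

(* Necessity: the encoded normalized columns of a code within delay l are
   pairwise distinct elements of zero_vecs. *)
Lemma code_size_bound T N l (S : {ffun 'I_T * 'I_N -> trop}) :
  tropical_code 1 S -> within_delay l S -> N <= #|zero_vecs T l|.
Proof.
move=> code delay.
have normal_col j : exists p : nat * {ffun 'I_T -> option 'I_l.+1},
    column S j = tshift p.1 (embed p.2) /\ p.2 \in zero_vecs T l.
  have [m [w [Ecol zw]]] := normal_form (code_column_finite j code).
  have /vec_within_tshift/embed_onto[u Ew] : vec_within l (tshift m w).
    by rewrite -Ecol => t; rewrite ffunE; exact: delay.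
  by exists (m, u); rewrite -has_zero_embed -Ew.
have [nf nfP] := fin_all_exists normal_col.
have nf_inj : injective (fun j => (nf j).2).
  move=> j k Ejk; apply: (code_shift_index (a := (nf k).1) (b := (nf j).1) code).
  by rewrite !(proj1 (nfP _)) !tshiftD Ejk addnC.
rewrite -[N]card_ord -(card_imset _ nf_inj); apply: subset_leq_card.
by apply/subsetP => _ /imsetP[j _ ->]; exact: (proj2 (nfP j)).
Qed.

(* Sufficiency: use N distinct normalized vectors as the columns. *)
Lemma code_of_size T N l : N <= #|zero_vecs T l| ->
  exists S : {ffun 'I_T * 'I_N -> trop}, tropical_code 1 S /\ within_delay l S.
Proof.
move=> hN; pose col (j : 'I_N) := enum_val (widen_ord hN j).
pose S := [ffun p : 'I_T * 'I_N => embed (col p.2) p.1].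
have colE j : column S j = embed (col j) by apply/ffunP => t; rewrite !ffunE.
exists S; split; last by move=> [t j]; rewrite ffunE; exact: (embed_within (col j) t).
apply: normalized_columns_code => [j k|j]; rewrite !colE.
  by move/embed_inj/enum_val_inj/(congr1 val) => /= jk; apply: val_inj.
by rewrite has_zero_embed enum_valP.
Qed.

Theorem mainTheorem3 (T l N : nat) :
  1 <= T -> 1 <= N ->
  (exists S : {ffun 'I_T * 'I_N -> trop},
      tropical_code 1 S /\ within_delay l S) <->
  N <= (l + 2) ^ T - (l + 1) ^ T.
Proof.
move=> _ _; rewrite -card_zero_vecs; split.
- by case=> S [code delay]; exact: code_size_bound code delay.
- exact: code_of_size.
Qed.
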